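(* Let $s\in(1,2]$ and let $f_1,\dots,f_n\in\overline{B}_s[0,1]$ be linearly independent with $\operatorname{span}\{f_i\}_{i=1}^n\subseteq\overline{B}_s[0,1]\cup\{0\}$. Then there exists a nonempty open interval $I\subset[0,1]$ such that for every $(a_1,\dots,a_n)\in\mathbb{R}^n\setminus\{(0,\dots,0)\}$, $\overline{\dim}_B G_{\sum_{i=1}^n a_if_i}([0,1]\setminus I)=s$, i.e. $\big(\sum_{i=1}^n a_if_i\big)|_{[0,1]\setminus I}\in\overline{B}_s([0,1]\setminus I)$.
   Context: $C[0,1]$ is the space of real-valued continuous functions on $[0,1]$; $G_f(E)=\{(x,f(x)):x\in E\}$; $\overline{\dim}_B$ is upper box dimension. For $E\subseteq[0,1]$, $\overline{B}_s(E)$ is the set of bounded continuous real functions $f$ on $E$ with $\overline{\dim}_B G_f(E)=s$; in particular $\overline{B}_s[0,1]=\{f\in C[0,1]:\overline{\dim}_B G_f([0,1])=s\}$. *)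

From HB Require Import structures.
From mathcomp Require Import all_boot all_order all_algebra.
From mathcomp Require Import all_classical all_reals all_analysis.
From mathcomp Require Import finmap.
Set Implicit Arguments. Unset Strict Implicit. Unset Printing Implicit Defensive.
Import Order.TTheory GRing.Theory Num.Theory.
Import numFieldNormedType.Exports.
Local Open Scope classical_set_scope.
Local Open Scope ring_scope.

Definition graph_on {R : realType} (f : R -> R) (E : set R) : set (R * R) :=
  [set (x, f x) | x in E].

Definition mesh_square {R : realType} (delta : R) (mk : int * int) : set (R * R) :=
  [set p | (mk.1%:~R * delta <= p.1 <= (mk.1 + 1)%:~R * delta) /\
           (mk.2%:~R * delta <= p.2 <= (mk.2 + 1)%:~R * delta)].

(* N_delta(F): the number of delta-mesh squares meeting F
   (finite when F is bounded). *)
Definition mesh_count {R : realType} (F : set (R * R)) (delta : R) : nat :=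
  (#|` fset_set [set mk : int * int | mesh_square delta mk `&` F !=set0] |)%fset.

Definition upper_box_dim {R : realType} (F : set (R * R)) : \bar R :=
  limf_esup (fun delta : R => ((ln (mesh_count F delta)%:R) / (- ln delta))%:E)
            (at_right 0).

Definition upper_Bs01 {R : realType} (s : R) (f : R -> R) : Prop :=
  {within `[0, 1], continuous f} /\ upper_box_dim (graph_on f `[0, 1]) = s%:E.

Definition lin_comb {R : realType} (n : nat) (a : 'I_n -> R) (f : 'I_n -> R -> R)
  : R -> R := fun x => \sum_(i < n) a i * f i x.

From HB Require Import structures.
From mathcomp Require Import all_boot all_order all_algebra.
From mathcomp Require Import all_classical all_reals all_analysis.
From mathcomp Require Import finmap.
From mathcomp Require Import zify ring lra.
Set Implicit Arguments. Unset Strict Implicit. Unset Printing Implicit Defensive.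
Import Order.TTheory GRing.Theory Num.Theory.
Import numFieldNormedType.Exports.
Local Open Scope classical_set_scope.
Local Open Scope ring_scope.

(* For t in [0, 1] let V_t be the set of coefficient vectors whose combination
   has upper box dimension < s on [0, t], together with 0.  Counting mesh
   squares column by column, the intermediate value theorem gives
   N_d(c f + e g) <= 2|c| N_d(f) + 2|e| N_d(g) + O(1/d); as s > 1 the O(1/d)
   term is negligible, so V_t is a linear subspace.  V_t shrinks as t grows,
   hence along t_i = i/(n+1), i = 0 .. n+1, some step has V_{t_i} = V_{t_{i+1}};
   take I = ]t_i, t_{i+1}[.  A nonzero combination outside V_{t_i} has
   dimension s on [0, t_i]; one inside lies in V_{t_{i+1}}, and since the
   dimension of a union of two graphs is the larger of the two, it has
   dimension s on [t_{i+1}, 1]. *)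

Section IntegersBetween.
Variable R : realType.

Definition ints_between (a b : R) : set int := [set k : int | a <= k%:~R <= b].

Lemma ints_betweenE (a b : R) :
  ints_between a b = [set k : int | Num.ceil a <= k <= Num.floor b].
Proof. by apply/seteqP; split => k; rewrite /= ceil_le_int floor_ge_int. Qed.

Lemma int_range_image (p q : int) :
  [set k : int | p <= k <= q] =
  (fun i : nat => p + i%:Z) @` `I_(absz (Num.max 0%R (q - p + 1)%R)).
Proof.
apply/seteqP; split => k /=.
  by move=> /andP[pk kq]; exists `|k - p|%N; rewrite /=; lia.
by move=> [i /= iN <-]; apply/andP; split; lia.
Qed.

Lemma finite_ints_between (a b : R) : finite_set (ints_between a b).
Proof. by rewrite ints_betweenE int_range_image; apply/finite_image/finite_II. Qed.

Lemma card_ints_between (a b : R) :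
  (#|` fset_set (ints_between a b)|)%:R =
  (Num.max 0 (Num.floor b - Num.ceil a + 1))%:~R :> R.
Proof.
rewrite ints_betweenE int_range_image fset_set_image; last exact: finite_II.
rewrite card_imfset /=; last by move=> i j /= /addrI [].
rewrite (card_fset_set (introT card_eq_II erefl)) pmulrn; congr (_%:~R); lia.
Qed.

Lemma card_ints_between_ge (a b : R) :
  b - a - 1 <= (#|` fset_set (ints_between a b)|)%:R.
Proof.
rewrite card_ints_between; set z := (Num.floor b - Num.ceil a + 1).
have : z%:~R <= (Num.max 0 z)%:~R :> R by rewrite ler_int le_max lexx orbT.
rewrite /z; have := ceil_itv a; have := floor_itv b; rewrite !intrD ?intrB; lra.
Qed.

Lemma card_ints_between_le (a b : R) : a <= b + 1 ->
  (#|` fset_set (ints_between a b)|)%:R <= b - a + 1.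
Proof.
move=> ab; rewrite card_ints_between.
have := ceil_itv a; have := floor_itv b; rewrite !intrD ?intrB => fb ca.
by have [z0|z0] := leP 0 (Num.floor b - Num.ceil a + 1); rewrite ?intrD ?intrB; lra.
Qed.
End IntegersBetween.

Lemma card_fset_set_le (T : choiceType) (A B : set T) : A `<=` B -> finite_set B ->
  (#|` fset_set A| <= #|` fset_set B|)%N.
Proof.
move=> AB finB; apply: fsubset_leq_card.
by rewrite -fset_set_sub //; apply: sub_finite_set finB.
Qed.

Section MeshCount.
Variable R : realType.
Implicit Types (F : set (R * R)) (d B : R).

Definition mesh_hits F d := [set mk : int * int | mesh_square d mk `&` F !=set0].

Definition centered_box B : set (R * R) := [set p | `|p.1| <= B /\ `|p.2| <= B].

Lemma mesh_index_between d B (x : R) (m : int) : 0 < d -> `|x| <= B ->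
  m%:~R * d <= x <= (m + 1)%:~R * d -> ints_between (- B / d - 1) (B / d) m.
Proof.
move=> d0; rewrite ler_norml intrD mulrDl mul1r => /andP[Bx xB] /andP[mx xm].
rewrite /ints_between /= lerBlDr ler_pdivlMr // ler_pdivrMr // mulrDl mul1r.
apply/andP; split; lra.
Qed.

Lemma finite_mesh_hits F d B : 0 < d -> F `<=` centered_box B ->
  finite_set (mesh_hits F d).
Proof.
move=> d0 FB; pose I := ints_between (- B / d - 1) (B / d).
apply: (@sub_finite_set _ _ (I `*` I)).
  move=> [m k] [p [[/= pm pk] /FB [p1B p2B]]].
  by split; [apply: mesh_index_between d0 p1B pm | apply: mesh_index_between d0 p2B pk].
by apply: finite_setX; apply: finite_ints_between.
Qed.

Lemma mesh_hitsU F F' d : mesh_hits (F `|` F') d = mesh_hits F d `|` mesh_hits F' d.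
Proof.
apply/seteqP; split => mk.
  by move=> [p [mp [Fp|F'p]]]; [left|right]; exists p.
by move=> [[p [mp Fp]]|[p [mp F'p]]]; exists p; split => //; [left|right].
Qed.

Lemma mesh_count_subset F F' d : F `<=` F' -> finite_set (mesh_hits F' d) ->
  (mesh_count F d <= mesh_count F' d)%N.
Proof.
by move=> FF' fin'; apply: card_fset_set_le fin' => mk [p [mp /FF' F'p]]; exists p.
Qed.

Lemma mesh_count_setU F F' d :
  finite_set (mesh_hits F d) -> finite_set (mesh_hits F' d) ->
  (mesh_count (F `|` F') d <= mesh_count F d + mesh_count F' d)%N.
Proof.
move=> fin fin'; rewrite /mesh_count -!/(mesh_hits _ d) mesh_hitsU fset_setU //.
exact: leq_card_fsetU.
Qed.

End MeshCount.

Lemma card_fset_set_fibers (T1 T2 : choiceType) (S : set (T1 * T2))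
    (M : set T1) (K : set T2) :
  finite_set M -> finite_set K -> S `<=` M `*` K ->
  #|` fset_set S| = (\sum_(m <- fset_set M) #|` fset_set [set k | S (m, k)]|)%N.
Proof.
move=> fM fK SMK.
have fS : finite_set S by apply: sub_finite_set SMK _; apply: finite_setX.
have fsum1 (T : choiceType) (A : set T) :
    finite_set A -> (\sum_(x \in A) 1)%N = #|` fset_set A|.
  by move=> fA; rewrite fsbig_finite // card_fset_sum1.
have notin_S p : ~ S p -> (p \in S : nat) = 0%N.
  by move=> nS; have /negbTE -> : p \notin S by rewrite notin_setE.
rewrite -fsum1 // (eq_fsbigr (fun p => (p \in S : nat))); last by move=> p ->.
rewrite (fsbig_widen S (M `*` K)) //; last first.
  by move=> p [_ /notin_S]; rewrite /preimage /= => ->.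
rewrite (eq_fsbigr (fun p => ((p.1, p.2) \in S : nat))); last by move=> [].
rewrite -(@pair_fsbig _ _ _ _ _ M K (fun m k => ((m, k) \in S : nat))) //.
rewrite fsbig_finite //; apply: eq_bigr => m _.
rewrite -fsum1; last by apply: (@sub_finite_set _ _ K) => // k /SMK [].
rewrite -(fsbig_widen [set k | S (m, k)] K) //; last first.
  by move=> k [_ /notin_S]; rewrite /preimage /= => ->.
- by move=> k /SMK [].
- by apply: eq_fsbigr => k /set_mem Smk; rewrite mem_set.
Qed.

Section GraphColumns.
Variables (R : realType) (al be d : R).
Hypothesis d_gt0 : 0 < d.

Definition in_column (m : int) (x : R) :=
  al <= x <= be /\ m%:~R * d <= x <= (m + 1)%:~R * d.

Definition column_hits (h : R -> R) (m : int) : set int :=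
  [set k | mesh_hits (graph_on h `[al, be]) d (m, k)].

Lemma column_hitsP h m k : column_hits h m k <->
  exists2 x, in_column m x & k%:~R * d <= h x <= (k + 1)%:~R * d.
Proof.
split.
  move=> [p [[/= mp kp] [x xab px]]]; move: mp kp; rewrite -px /= => mx kx.
  by exists x => //; split => //; move: xab; rewrite in_itv.
move=> [x [xab xm] kx]; exists (x, h x); split => //.
by exists x => //; rewrite in_itv.
Qed.

Lemma finite_column_hits h m :
  finite_set (mesh_hits (graph_on h `[al, be]) d) -> finite_set (column_hits h m).
Proof.
move=> fin; apply: (@sub_finite_set _ _ (snd @` mesh_hits (graph_on h `[al, be]) d)).
  by move=> k hk; exists (m, k).
exact: finite_image.
Qed.

Lemma card_column_hits_le h m lo hi : lo <= hi ->
  (forall x, in_column m x -> lo <= h x <= hi) ->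
  (#|` fset_set (column_hits h m)|)%:R <= (hi - lo) / d + 2.
Proof.
move=> lohi hb.
have sub : column_hits h m `<=` ints_between (lo / d - 1) (hi / d).
  move=> k /column_hitsP [x /hb /andP[lox xhi] /andP[kx xk]].
  rewrite /ints_between /= lerBlDr ler_pdivlMr // ler_pdivrMr // mulrDl mul1r.
  by move: xk; rewrite intrD mulrDl mul1r => xk; apply/andP; split; lra.
have := card_fset_set_le sub (finite_ints_between _ _).
rewrite -(ler_nat R) => /le_trans; apply.
have lohi' : lo / d <= hi / d by rewrite ler_pM2r // invr_gt0.
by apply: le_trans (card_ints_between_le _) _; rewrite ?mulrBl; lra.
Qed.

Lemma column_dist_le f m x1 x2 : finite_set (column_hits f m) ->
  {within `[al, be], continuous f} -> in_column m x1 -> in_column m x2 ->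
  `|f x2 - f x1| <= d * ((#|` fset_set (column_hits f m)|)%:R + 1).
Proof.
move=> fin cf; wlog x12 : x1 x2 / x1 <= x2 => [hwlog|].
  by case: (leP x1 x2) => [|/ltW] x12 c1 c2; [|rewrite distrC]; apply: hwlog.
move=> [/andP[a1 b1] /andP[c1 e1]] [/andP[a2 b2] /andP[c2 e2]].
have cf12 : {within `[x1, x2], continuous f}.
  apply: continuous_subspaceW cf => y /=; rewrite !in_itv /= => /andP[y1 y2].
  by apply/andP; split; lra.
set lo := Num.min (f x1) (f x2); set hi := Num.max (f x1) (f x2).
have sub : ints_between (lo / d) (hi / d) `<=` column_hits f m.
  move=> k /andP[]; rewrite ler_pdivlMr // ler_pdivrMr // => lok khi.
  have kd : lo <= k%:~R * d <= hi by rewrite lok khi.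
  have [c] := IVT x12 cf12 kd.
  rewrite in_itv /= => /andP[xc cx] fc; apply/column_hitsP; exists c.
    by split; apply/andP; split; lra.
  by rewrite fc intrD mulrDl mul1r; apply/andP; split; lra.
have := card_fset_set_le sub fin; rewrite -(ler_nat R) => card_ge.
have := card_ints_between_ge (lo / d) (hi / d).
have -> : `|f x2 - f x1| = hi - lo.
  rewrite /hi /lo; case: (leP (f x1) (f x2)) => f12.
    by rewrite ger0_norm; lra.
  by rewrite ltr0_norm; lra.
rewrite -mulrBl -ler_pdivrMl //; lra.
Qed.

Lemma card_column_hits_lin f g c e m :
  finite_set (column_hits f m) -> finite_set (column_hits g m) ->
  {within `[al, be], continuous f} -> {within `[al, be], continuous g} ->
  (#|` fset_set (column_hits (fun x => c * f x + e * g x) m)|)%:R <=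
  2 * `|c| * (#|` fset_set (column_hits f m)|)%:R +
  2 * `|e| * (#|` fset_set (column_hits g m)|)%:R + (2 * `|c| + 2 * `|e| + 2).
Proof.
move=> finf fing cf cg.
set nf : R := (#|` fset_set (column_hits f m)|)%:R.
set ng : R := (#|` fset_set (column_hits g m)|)%:R.
have nf0 : 0 <= nf by []; have ng0 : 0 <= ng by [].
have c0 := normr_ge0 c; have e0 := normr_ge0 e.
set h := fun x => c * f x + e * g x.
have [[x0 x0m]|empty] := pselect (exists x, in_column m x); last first.
  have none x : in_column m x -> 0 <= h x <= 0 by move=> xm; case: empty; exists x.
  have := mulr_ge0 c0 nf0; have := mulr_ge0 e0 ng0.
  by have := card_column_hits_le (lexx 0) none; rewrite subrr mul0r; lra.
set W : R := `|c| * (d * (nf + 1)) + `|e| * (d * (ng + 1)).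
have hW x : in_column m x -> h x0 - W <= h x <= h x0 + W.
  move=> xm; rewrite -ler_distl.
  have -> : h x - h x0 = c * (f x - f x0) + e * (g x - g x0) by rewrite /h; ring.
  apply: le_trans (ler_normD _ _) _; rewrite !normrM.
  by apply: lerD; apply: ler_wpM2l => //; apply: column_dist_le.
have W0 : 0 <= W.
  by apply: addr_ge0; apply: mulr_ge0 => //; apply: mulr_ge0; rewrite ?addr_ge0 // ltW.
apply: le_trans (card_column_hits_le _ hW) _; first lra.
have -> : (h x0 + W - (h x0 - W)) / d = 2 * (`|c| * (nf + 1) + `|e| * (ng + 1)).
  by rewrite /W; field; rewrite gt_eqF.
lra.
Qed.
End GraphColumns.

Section GraphCount.
Variable R : realType.
Implicit Types (h : R -> R) (E : set R) (B d : R).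

Lemma itv_sub01 (al be : R) : 0 <= al -> be <= 1 -> `[al, be] `<=` `[0, 1].
Proof. by move=> al0 be1; apply: subset_itv; rewrite bnd_simp. Qed.

Lemma graph_on_sub_box h E B : E `<=` `[0, 1] ->
  {in `[0, 1], forall x, `|h x| <= B} -> graph_on h E `<=` centered_box (Num.max 1 B).
Proof.
move=> E01 hB _ [x /E01 x01 <-]; split => /=; rewrite le_max.
  by move: x01; rewrite /= in_itv /= => /andP[x0 x1]; rewrite ger0_norm ?x1.
by rewrite hB ?orbT.
Qed.

Lemma finite_graph_hits h E B d : 0 < d -> E `<=` `[0, 1] ->
  {in `[0, 1], forall x, `|h x| <= B} -> finite_set (mesh_hits (graph_on h E) d).
Proof. by move=> d0 E01 hB; apply: finite_mesh_hits d0 (graph_on_sub_box E01 hB). Qed.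

Lemma mesh_count_graph_columns h (al be : R) B d : 0 < d -> 0 <= al -> be <= 1 ->
  {in `[0, 1], forall x, `|h x| <= B} ->
  (mesh_count (graph_on h `[al, be]) d)%:R =
  \sum_(m <- fset_set (ints_between (-1) (1 / d)))
     (#|` fset_set (column_hits al be d h m)|)%:R :> R.
Proof.
move=> d0 al0 be1 hB; rewrite -natr_sum; congr (_%:R).
have box := graph_on_sub_box (itv_sub01 al0 be1) hB.
rewrite /mesh_count (@card_fset_set_fibers _ _ _ (ints_between (-1) (1 / d))
  (ints_between (- Num.max 1 B / d - 1) (Num.max 1 B / d))) //.
- exact: finite_ints_between.
- exact: finite_ints_between.
move=> [m k] [p [[/= pm pk] Fp]]; have [p1B p2B] := box _ Fp; split => /=.
  move: Fp pm => [x xab <-] /= /andP[mx xm].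
  move: xab => /=; rewrite in_itv /= => /andP[x0 x1].
  rewrite /ints_between /= ler_pdivlMr //; apply/andP; split; last lra.
  have : 0 <= (m + 1)%:~R * d by lra.
  by rewrite pmulr_lge0 // intrD; lra.
exact: mesh_index_between d0 p2B pk.
Qed.

Lemma mesh_count_lin f g (c e al be Bf Bg d : R) : 0 < d -> 0 <= al -> be <= 1 ->
  {in `[0, 1], forall x, `|f x| <= Bf} -> {in `[0, 1], forall x, `|g x| <= Bg} ->
  {within `[al, be], continuous f} -> {within `[al, be], continuous g} ->
  (mesh_count (graph_on (fun x => c * f x + e * g x) `[al, be]) d)%:R <=
  2 * `|c| * (mesh_count (graph_on f `[al, be]) d)%:R +
  2 * `|e| * (mesh_count (graph_on g `[al, be]) d)%:R +
  (2 * `|c| + 2 * `|e| + 2) * (1 / d + 2) :> R.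
Proof.
move=> d0 al0 be1 hf hg cf cg.
have hfg : {in `[0, 1], forall x, `|c * f x + e * g x| <= `|c| * Bf + `|e| * Bg}.
  move=> x x01; apply: le_trans (ler_normD _ _) _; rewrite !normrM.
  by apply: lerD; apply: ler_wpM2l; rewrite ?normr_ge0 ?hf ?hg.
have fin h B : {in `[0, 1], forall x, `|h x| <= B} ->
    forall m, finite_set (column_hits al be d h m).
  by move=> hB m; apply/finite_column_hits/(finite_graph_hits d0 (itv_sub01 al0 be1) hB).
rewrite (mesh_count_graph_columns d0 al0 be1 hf) (mesh_count_graph_columns d0 al0 be1 hg).
rewrite (mesh_count_graph_columns d0 al0 be1 hfg).
apply: le_trans.
  apply: ler_sum => m _.
  exact: (card_column_hits_lin d0 c e (fin _ _ hf m) (fin _ _ hg m) cf cg).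
rewrite big_split /= big_split /= -!mulr_sumr lerD2l.
rewrite big_const_seq count_predT iter_addr_0 -[X in X <= _]mulr_natr.
apply: ler_wpM2l; first by rewrite !addr_ge0 ?mulr_ge0.
have d'_gt0 : 0 < 1 / d by rewrite divr_gt0.
by apply: le_trans (card_ints_between_le _) _; lra.
Qed.
End GraphCount.

Section LimfEsup.
Variable R : realType.
Local Open Scope ereal_scope.

Lemma le_limf_esup (F : set_system R) (r1 r2 : R -> \bar R) : Filter F ->
  (\forall x \near F, r1 x <= r2 x) -> limf_esup r1 F <= limf_esup r2 F.
Proof.
move=> FF r12; rewrite !limf_esupE; apply: le_ereal_inf_tmp => _ [V FV <-].
apply: ge_ereal_inf; exists (ereal_sup (r1 @` (V `&` [set x | r1 x <= r2 x]))).
  by exists (V `&` [set x | r1 x <= r2 x]) => //; apply: filterI.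
apply: ge_ereal_sup => _ [x [Vx r12x] <-].
by apply: le_trans r12x _; apply: ereal_sup_ubound; exists x.
Qed.

Lemma limf_esup_lt_near (F : set_system R) (r : R -> R) (y : R) : Filter F ->
  limf_esup (fun x => (r x)%:E) F < y%:E -> \forall x \near F, (r x < y)%R.
Proof.
move=> FF; rewrite limf_esupE => /ereal_inf_lt [_ [V FV <-]] Vy.
apply: filterS FV => x Vx; rewrite -lte_fin; apply: le_lt_trans Vy.
by apply: ereal_sup_ubound; exists x.
Qed.

Lemma limf_esup_le_near (F : set_system R) (r : R -> R) (z : R) :
  (\forall x \near F, (r x <= z)%R) -> limf_esup (fun x => (r x)%:E) F <= z%:E.
Proof.
move=> rz; rewrite limf_esupE; apply: ge_ereal_inf.
exists (ereal_sup ((fun x => (r x)%:E) @` [set x | (r x <= z)%R])).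
  by exists [set x | (r x <= z)%R].
by apply: ge_ereal_sup => _ [x xz <-]; rewrite lee_fin.
Qed.

Lemma lte_real_between (x : \bar R) (s : R) : x < s%:E ->
  exists2 y : R, x < y%:E & (y < s)%R.
Proof.
case: x => [r| |] //=.
- by rewrite lte_fin => rs; exists ((r + s) / 2)%R; rewrite ?lte_fin; lra.
- by move=> _; exists (s - 1)%R; rewrite ?ltNye //; lra.
Qed.
End LimfEsup.

Section UpperBoxDimension.
Variable R : realType.
Implicit Types F : set (R * R).

Lemma near_right0_lt1 : \forall d \near (0 : R)^'+, 0 < d < 1.
Proof.
near=> d; apply/andP; split; near: d; [exact: nbhs_right_gt | exact: nbhs_right_lt].
Unshelve. all: by end_near.
Qed.

Lemma ler_ln_nat (a b : nat) : (a <= b)%N -> ln (a%:R : R) <= ln b%:R.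
Proof.
case: a => [|a] ab; last by rewrite ler_ln ?posrE ?ltr0n ?ler_nat // (leq_trans _ ab).
by rewrite ln0 //; case: b ab => [|b] _; [rewrite ln0 | apply: ln_ge0; rewrite ler1n].
Qed.

Lemma upper_box_dim_le_near F F' :
  (\forall d \near 0^'+, (mesh_count F d <= mesh_count F' d)%N) ->
  (upper_box_dim F <= upper_box_dim F')%E.
Proof.
move=> FF'; apply: le_limf_esup; near=> d; rewrite lee_fin.
have /andP[d0 d1] : 0 < d < 1 by near: d; exact: near_right0_lt1.
have L : 0 < - ln d by rewrite oppr_gt0 ln_lt0 // d0 d1.
by rewrite ler_pM2r ?invr_gt0 //; apply: ler_ln_nat; near: d.
Unshelve. all: by end_near.
Qed.

Lemma upper_box_dim_subset F F' B : F `<=` F' -> F' `<=` centered_box B ->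
  (upper_box_dim F <= upper_box_dim F')%E.
Proof.
move=> FF' F'B; apply: upper_box_dim_le_near; near=> d.
have /andP[d0 _] : 0 < d < 1 by near: d; exact: near_right0_lt1.
exact/mesh_count_subset/(finite_mesh_hits d0 F'B).
Unshelve. all: by end_near.
Qed.

Lemma upper_box_dim_le_power F (K y : R) : 1 <= K -> 0 <= y ->
  (\forall d \near 0^'+, (mesh_count F d)%:R <= K * expR (y * - ln d)) ->
  (upper_box_dim F <= y%:E)%E.
Proof.
move=> K1 y0 NK; apply/lee_addgt0Pr => e e0; apply: limf_esup_le_near; near=> d.
have /andP[d0 d1] : 0 < d < 1 by near: d; exact: near_right0_lt1.
have L : 0 < - ln d by rewrite oppr_gt0 ln_lt0 // d0 d1.
have lnK : ln K <= e * - ln d.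
  have : d < expR (- (ln K / e)) by near: d; apply: nbhs_right_lt; exact: expR_gt0.
  rewrite -[X in X < _]lnK ?posrE // ltr_expR ltrNr ltr_pdivrMr // => dK.
  by rewrite mulrC; lra.
have NKd : (mesh_count F d)%:R <= K * expR (y * - ln d) by near: d.
rewrite ler_pdivrMr //; case: (mesh_count F d) NKd => [_|N NKd].
  by rewrite ln0 //; apply: mulr_ge0; lra.
have K0 : 0 < K by lra.
move: NKd; rewrite -ler_ln ?posrE ?ltr0n ?mulr_gt0 ?expR_gt0 //.
by rewrite lnM ?posrE ?expR_gt0 // expRK; lra.
Unshelve. all: by end_near.
Qed.

Lemma mesh_count_le_expR F (y : R) : (upper_box_dim F < y%:E)%E ->
  \forall d \near 0^'+, (mesh_count F d)%:R <= expR (y * - ln d).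
Proof.
move=> /limf_esup_lt_near Fy; near=> d.
have /andP[d0 d1] : 0 < d < 1 by near: d; exact: near_right0_lt1.
have L : 0 < - ln d by rewrite oppr_gt0 ln_lt0 // d0 d1.
have : ln (mesh_count F d)%:R / - ln d < y by near: d; exact: Fy.
case: (mesh_count F d) => [_|N]; first exact/ltW/expR_gt0.
by rewrite ltr_pdivrMr // -[X in X <= _]lnK ?posrE ?ltr0n // ler_expR => /ltW.
Unshelve. all: by end_near.
Qed.

Lemma upper_box_dim_lt_of_count_le F F1 F2 (A B C s : R) :
  1 < s -> 0 <= A -> 0 <= B -> 0 <= C ->
  (\forall d \near 0^'+, (mesh_count F d)%:R <=
      A * (mesh_count F1 d)%:R + B * (mesh_count F2 d)%:R + C / d) ->
  (upper_box_dim F1 < s%:E)%E -> (upper_box_dim F2 < s%:E)%E ->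
  (upper_box_dim F < s%:E)%E.
Proof.
move=> s1 A0 B0 C0 NF F1s F2s.
(* Choosing y >= 1 also makes the term C / d an O(d^-y). *)
have Fs : (Order.max (Order.max (upper_box_dim F1) (upper_box_dim F2)) 1%:E < s%:E)%E.
  by rewrite !gt_max F1s F2s lte_fin s1.
have [y] := lte_real_between Fs; rewrite !gt_max lte_fin => /andP[/andP[F1y F2y] y1] ys.
have y0 : 0 <= y by lra.
have K1 : 1 <= A + B + C + 1 by lra.
apply: le_lt_trans (upper_box_dim_le_power K1 y0 _) _; last by rewrite lte_fin.
have N1 := mesh_count_le_expR F1y; have N2 := mesh_count_le_expR F2y.
near=> d.
have /andP[d0 d1] : 0 < d < 1 by near: d; exact: near_right0_lt1.
have NFd : (mesh_count F d)%:R <=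
    A * (mesh_count F1 d)%:R + B * (mesh_count F2 d)%:R + C / d by near: d.
have N1d : (mesh_count F1 d)%:R <= expR (y * - ln d) by near: d.
have N2d : (mesh_count F2 d)%:R <= expR (y * - ln d) by near: d.
have dT : 1 / d <= expR (y * - ln d).
  have L : 0 < - ln d by rewrite oppr_gt0 ln_lt0 // d0 d1.
  rewrite div1r -[X in X <= _]lnK ?posrE ?invr_gt0 // lnV ?posrE // ler_expR.
  by rewrite ler_peMl ?ltW.
move: NFd N1d N2d dT; set T := expR _ => NFd N1d N2d dT.
have : A * (mesh_count F1 d)%:R <= A * T by apply: ler_wpM2l.
have : B * (mesh_count F2 d)%:R <= B * T by apply: ler_wpM2l.
have : C / d <= C * T by apply: ler_wpM2l => //; rewrite -div1r.
have : 0 <= T := ltW (expR_gt0 _).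
lra.
Unshelve. all: by end_near.
Qed.
End UpperBoxDimension.

Section SubspaceChain.
Variables (K : fieldType) (vT : vectType K).

Record subspace_pred (V : vT -> Prop) := SubspacePred {
  subspace_pred0 : V 0;
  subspace_predD : forall x y, V x -> V y -> V (x + y);
  subspace_predZ : forall (k : K) x, V x -> V (k *: x) }.

Lemma span_subspace_pred V (X : seq vT) : subspace_pred V ->
  (forall x, x \in X -> V x) -> forall v, v \in <<X>>%VS -> V v.
Proof.
move=> [V0 VD VZ] XV v vX; rewrite (@coord_span _ _ _ (in_tuple X) v vX).
by apply: (big_ind V) => // i _; apply/VZ/XV/mem_nth.
Qed.

Lemma subspace_chain_stabilizes (V : nat -> vT -> Prop) :
  (forall i, (i <= (\dim {:vT}).+1)%N -> subspace_pred (V i)) ->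
  (forall i x, (i <= \dim {:vT})%N -> V i.+1 x -> V i x) ->
  exists2 i, (i <= \dim {:vT})%N & forall x, V i x -> V i.+1 x.
Proof.
move=> Vsub Vanti; apply: contrapT => nostab.
have jump i : (i <= \dim {:vT})%N -> exists a, V i a /\ ~ V i.+1 a.
  move=> idim; apply: contrapT => noa; apply: nostab; exists i => // x Vix.
  by apply: contrapT => nVx; apply: noa; exists x.
set m := (\dim {:vT}).+1.
have free_chain k : (k <= m)%N -> exists X : seq vT,
    [/\ size X = k, free X & forall x, x \in X -> V (m - k)%N x].
  elim: k => [|k IHk] km; first by exists [::]; rewrite nil_free.
  have [X [sX fX XV]] := IHk (ltnW km).
  have [|a [Va]] := jump (m - k.+1)%N; first by rewrite /m subSS leq_subr.
  rewrite subnSK // => nVa; exists (a :: X); split => /=; first by rewrite sX.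
    have Vmk : subspace_pred (V (m - k)%N) by apply: Vsub; rewrite leq_subr.
    by rewrite free_cons fX andbT; apply/negP => /(span_subspace_pred Vmk XV).
  move=> x /predU1P [-> // | xX]; apply: Vanti; last by rewrite subnSK //; exact: XV.
  by rewrite /m subSS leq_subr.
have [X [sX fX _]] := free_chain m (leqnn m).
by have := dimvS (subvf <<X>>%VS); rewrite (eqP fX) sX ltnn.
Qed.
End SubspaceChain.

Section GraphDimension.
Variable R : realType.
Implicit Types (f g h : R -> R) (E : set R).

Lemma continuous_itv01_bounded h : {within `[0, 1], continuous h} ->
  exists B, {in `[0, 1], forall x, `|h x| <= B}.
Proof.
move=> ch; have [xM _ hM] := EVT_max ler01 ch; have [xm _ hm] := EVT_min ler01 ch.
exists (`|h xM| + `|h xm|) => x x01.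
have /andP[xM1 xM2] : - `|h xM| <= h xM <= `|h xM| by rewrite -ler_norml.
have /andP[xm1 xm2] : - `|h xm| <= h xm <= `|h xm| by rewrite -ler_norml.
have := hM x x01; have := hm x x01; rewrite ler_norml; lra.
Qed.

Lemma upper_box_dim_graph_subset h E E' : E `<=` E' -> E' `<=` `[0, 1] ->
  {within `[0, 1], continuous h} ->
  (upper_box_dim (graph_on h E) <= upper_box_dim (graph_on h E'))%E.
Proof.
move=> EE' E'01 /continuous_itv01_bounded [B hB].
apply: upper_box_dim_subset (graph_on_sub_box E'01 hB).
by move=> _ [x Ex <-]; exists x => //; apply: EE'.
Qed.

Lemma upper_box_dim_graph_lin_lt f g (c e al be s : R) : 1 < s -> 0 <= al -> be <= 1 ->
  {within `[0, 1], continuous f} -> {within `[0, 1], continuous g} ->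
  (upper_box_dim (graph_on f `[al, be]) < s%:E)%E ->
  (upper_box_dim (graph_on g `[al, be]) < s%:E)%E ->
  (upper_box_dim (graph_on (fun x => (c * f x + e * g x)%R) `[al, be]) < s%:E)%E.
Proof.
move=> s1 al0 be1 cf cg fs gs.
have [Bf hf] := continuous_itv01_bounded cf; have [Bg hg] := continuous_itv01_bounded cg.
have cf' := continuous_subspaceW (itv_sub01 al0 be1) cf.
have cg' := continuous_subspaceW (itv_sub01 al0 be1) cg.
set K : R := 2 * `|c| + 2 * `|e| + 2.
have K0 : 0 <= K by rewrite !addr_ge0 ?mulr_ge0.
apply: (@upper_box_dim_lt_of_count_le _ _ _ _ (2 * `|c|) (2 * `|e|) (3 * K)) fs gs;
  rewrite ?mulr_ge0 //.
near=> d.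
have /andP[d0 d1] : 0 < d < 1 by near: d; exact: near_right0_lt1.
apply: le_trans (mesh_count_lin c e d0 al0 be1 hf hg cf' cg') _.
rewrite lerD2l (_ : 3 * K / d = K * (3 / d)); last by rewrite mulrAC mulrC mulrA.
apply: ler_wpM2l => //.
have : 1 <= 1 / d by rewrite ler_pdivlMr // mul1r ltW.
lra.
Unshelve. all: by end_near.
Qed.

Lemma upper_box_dim_graph_split_lt h (t s : R) : 1 < s -> 0 <= t <= 1 ->
  {within `[0, 1], continuous h} ->
  (upper_box_dim (graph_on h `[0%R, t]) < s%:E)%E ->
  (upper_box_dim (graph_on h `[t, 1%R]) < s%:E)%E ->
  (upper_box_dim (graph_on h `[0%R, 1%R]) < s%:E)%E.
Proof.
move=> s1 /andP[t0 t1] /continuous_itv01_bounded [B hB] ls rs.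
apply: (@upper_box_dim_lt_of_count_le _ _ _ _ 1 1 0) ls rs => //.
near=> d.
have /andP[d0 _] : 0 < d < 1 by near: d; exact: near_right0_lt1.
rewrite !mul1r mul0r addr0 -natrD ler_nat.
have fin E : E `<=` `[0, 1] -> finite_set (mesh_hits (graph_on h E) d).
  by move=> E01; apply: finite_graph_hits d0 E01 hB.
have fin0t := fin _ (itv_sub01 (lexx 0) t1); have fint1 := fin _ (itv_sub01 t0 (lexx 1)).
apply: leq_trans (mesh_count_setU fin0t fint1).
apply: mesh_count_subset; last by rewrite mesh_hitsU finite_setU.
move=> _ [x + <-]; rewrite /= in_itv /= => /andP[x0 x1].
case: (leP x t) => xt; [left|right]; exists x => //=.
  by rewrite in_itv /= x0 xt.
by rewrite in_itv /= x1 ltW.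
Unshelve. all: by end_near.
Qed.
End GraphDimension.

Section Proposition4p1.
Variables (R : realType) (s : R) (n : nat) (f : 'I_n -> R -> R).
Hypothesis s_gt1 : 1 < s.
Hypothesis f_indep : forall a : 'I_n -> R,
  (forall x, x \in `[0, 1] -> lin_comb a f x = 0) -> forall i, a i = 0.
Hypothesis f_span : forall a : 'I_n -> R,
  upper_Bs01 s (lin_comb a f) \/ (forall x, x \in `[0, 1] -> lin_comb a f x = 0).

(* Coefficient vectors live in ['rV_n], a [vectType] of dimension [n], so that
   [subspace_chain_stabilizes] applies. *)
Definition comb (v : 'rV[R]_n) : R -> R := lin_comb (fun i => v ord0 i) f.

Lemma lin_comb_row (a : 'I_n -> R) : lin_comb a f = comb (\row_i a i).
Proof. by apply: funext => x; apply: eq_bigr => i _; rewrite mxE. Qed.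

Lemma combD (v w : 'rV[R]_n) : comb (v + w) = (fun x => 1 * comb v x + 1 * comb w x).
Proof.
apply: funext => x; rewrite !mul1r -big_split /=.
by apply: eq_bigr => i _; rewrite mxE mulrDl.
Qed.

Lemma combZ k (v : 'rV[R]_n) : comb (k *: v) = (fun x => k * comb v x + 0 * comb v x).
Proof.
apply: funext => x; rewrite mul0r addr0 /comb /lin_comb mulr_sumr.
by apply: eq_bigr => i _; rewrite mxE mulrA.
Qed.

Lemma comb_Bs (v : 'rV[R]_n) : v != 0 -> upper_Bs01 s (comb v).
Proof.
move=> v0; have [//|comb0] := f_span (fun i => v ord0 i).
case/eqP: v0; apply/matrixP => i j; rewrite mxE (ord1 i).
exact: f_indep comb0 j.
Qed.

Definition low_dim_on (t : R) (v : 'rV[R]_n) : Prop :=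
  v = 0 \/ (upper_box_dim (graph_on (comb v) `[0%R, t]) < s%:E)%E.

Lemma low_dim_on_subspace t : 0 <= t <= 1 -> subspace_pred (low_dim_on t).
Proof.
move=> /andP[t0 t1].
have lin_lt v w c e : v != 0 -> w != 0 -> low_dim_on t v -> low_dim_on t w ->
    (upper_box_dim (graph_on (fun x => (c * comb v x + e * comb w x)%R) `[0%R, t])
     < s%:E)%E.
  move=> v0 w0 [/eqP|vs]; first by rewrite (negbTE v0).
  case=> [/eqP|ws]; first by rewrite (negbTE w0).
  have [cv _] := comb_Bs v0; have [cw _] := comb_Bs w0.
  exact: upper_box_dim_graph_lin_lt.
split; first by left.
- move=> v w; have [->|v0] := eqVneq v 0; first by rewrite add0r.
  have [->|w0] := eqVneq w 0; first by rewrite addr0.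
  have [->|vw0] := eqVneq (v + w) 0; first by left.
  by move=> Vv Vw; right; rewrite combD; apply: lin_lt.
- move=> k v; have [->|kv0] := eqVneq (k *: v) 0; first by left.
  have [->|v0] := eqVneq v 0; first by rewrite scaler0; left.
  by move=> Vv; right; rewrite combZ; apply: lin_lt.
Qed.

Lemma low_dim_on_antitone t t' v : 0 <= t <= t' -> t' <= 1 ->
  low_dim_on t' v -> low_dim_on t v.
Proof.
rewrite /low_dim_on => /andP[t0 tt'] t'1 [->|v_lt]; first by left.
have [->|/comb_Bs [cv _]] := eqVneq v 0; first by left.
right; apply: le_lt_trans v_lt; apply: upper_box_dim_graph_subset cv.
  by apply: subset_itv; rewrite bnd_simp.
exact: itv_sub01.
Qed.

Lemma upper_box_dim_off_gap t t' : 0 <= t <= t' -> t' <= 1 ->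
  (forall v, low_dim_on t v -> low_dim_on t' v) ->
  forall v, v != 0 ->
  upper_box_dim (graph_on (comb v) (`[0, 1] `\` `]t, t'[)) = s%:E.
Proof.
move=> /andP[t0 tt'] t'1 stab v v0; have [cv dimv] := comb_Bs v0.
have gap01 : `[0, 1] `\` `]t, t'[ `<=` `[0, 1] by move=> x [].
have sub0t : `[0, t] `<=` `[0, 1] `\` `]t, t'[.
  move=> x /=; rewrite !in_itv /= => /andP[x0 xt]; split => /=.
    by rewrite x0 /=; lra.
  by move=> /andP[tx _]; lra.
have subt'1 : `[t', 1] `<=` `[0, 1] `\` `]t, t'[.
  move=> x /=; rewrite !in_itv /= => /andP[t'x x1]; split => /=.
    by rewrite x1 andbT; lra.
  by move=> /andP[_ xt']; lra.
apply/eqP; rewrite eq_le -{1}dimv upper_box_dim_graph_subset //=.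
have [dim_lt|] := boolP (upper_box_dim (graph_on (comb v) `[0%R, t]) < s%:E)%E; last first.
  by rewrite -leNgt => /le_trans; apply; apply: upper_box_dim_graph_subset.
have [/eqP|dim'_lt] := stab v (or_intror dim_lt); first by rewrite (negbTE v0).
have : ~~ (upper_box_dim (graph_on (comb v) `[t', 1%R]) < s%:E)%E.
  have t'01 : 0 <= t' <= 1 by apply/andP; split; lra.
  by apply/negP => /(upper_box_dim_graph_split_lt s_gt1 t'01 cv dim'_lt); rewrite dimv ltxx.
by rewrite -leNgt => /le_trans; apply; apply: upper_box_dim_graph_subset.
Qed.

Definition grid (i : nat) : R := i%:R / n.+1%:R.

Lemma grid_itv i : (i <= n.+1)%N -> 0 <= grid i <= 1.
Proof.
by move=> ilen; rewrite divr_ge0 //= ler_pdivrMr ?ltr0n // mul1r ler_nat.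
Qed.

Lemma grid_lt i : grid i < grid i.+1.
Proof. by rewrite ltr_pM2r ?invr_gt0 ?ltr0n // ltr_nat. Qed.

Lemma low_dim_on_grid_stabilizes : exists2 i, (i <= n)%N &
  forall v, low_dim_on (grid i) v -> low_dim_on (grid i.+1) v.
Proof.
have dimn : \dim {:'rV[R]_n} = n by rewrite dimvf dim_matrix mul1r.
have : exists2 i, (i <= \dim {:'rV[R]_n})%N &
    forall v, low_dim_on (grid i) v -> low_dim_on (grid i.+1) v.
  apply: subspace_chain_stabilizes => [i|i v]; rewrite dimn => ilen.
    exact/low_dim_on_subspace/grid_itv.
  have /andP[gi0 _] := grid_itv (leqW ilen).
  have /andP[_ gi1] := grid_itv (ilen : (i.+1 <= n.+1)%N).
  by apply: low_dim_on_antitone => //; rewrite gi0 ltW ?grid_lt.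
by rewrite dimn.
Qed.
End Proposition4p1.

Theorem proposition4p1 (R : realType) (s : R) (n : nat) (f : 'I_n -> R -> R) :
  1 < s <= 2 ->
  (forall i, upper_Bs01 s (f i)) ->
  (* linear independence in C[0,1] *)
  (forall a : 'I_n -> R,
      (forall x, x \in `[0, 1] -> lin_comb a f x = 0) -> forall i, a i = 0) ->
  (* span{f_i} is contained in \overline{B}_s[0,1] \cup {0} *)
  (forall a : 'I_n -> R,
      upper_Bs01 s (lin_comb a f) \/ (forall x, x \in `[0, 1] -> lin_comb a f x = 0)) ->
  exists u v : R, [/\ 0 <= u, u < v, v <= 1 &
    forall a : 'I_n -> R, (exists i, a i != 0) ->
      upper_box_dim (graph_on (lin_comb a f) (`[0, 1] `\` `]u, v[)) = s%:E].
Proof.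
move=> /andP[s_gt1 _] _ f_indep f_span.
have [i ilen stab] := low_dim_on_grid_stabilizes s_gt1 f_indep f_span.
have /andP[gi0 _] := grid_itv R (leqW ilen).
have /andP[_ gi1] := grid_itv R (ilen : (i.+1 <= n.+1)%N).
have gi := grid_lt R n i.
have gii : 0 <= grid R n i <= grid R n i.+1 by rewrite gi0 ltW.
exists (grid R n i), (grid R n i.+1); split => // a [j aj].
rewrite lin_comb_row; apply: (upper_box_dim_off_gap s_gt1 f_indep f_span gii gi1 stab).
by apply/eqP => /matrixP/(_ ord0 j); rewrite !mxE; apply/eqP.
Qed.
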